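(* Let $\ell\ge1$, $2n=\ell(\ell+1)$, and fix integers $k\ge1$ and $N\ge1$ independent of $\ell$, with $2k\le\ell+1$. Let $Y^{(1)},\dots,Y^{(N)}$ be independent, each uniformly random among all ordered partitions of $[2n]$ into $\ell+1$ subsets of size $\ell$. Then the probability $P_N$ that some $S\in\mathcal S_{2k}$ is generated by none of $Y^{(1)},\dots,Y^{(N)}$ satisfies $P_N\le\binom{2n}{2k}P(S)^N$ and $P_N=\mathcal O(\ell^{4k-N})$ as $\ell\to\infty$; in particular $P_N\to0$ whenever $N>4k$.
   Context: $\mathcal S_{2k}=\{S\subseteq[2n]:|S|=2k\}$. A set $S$ is generated from a partition $Y=(Y_1,\dots,Y_{\ell+1})$ if no two elements of $S$ lie in the same $Y_i$. $P(S)=1-\ell^{2k}\binom{\ell+1}{2k}\binom{2n}{2k}^{-1}$ is the probability that a fixed $S$ is not generated by one uniformly random partition. *)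

From mathcomp Require Import all_boot all_order all_algebra.
Set Implicit Arguments. Unset Strict Implicit. Unset Printing Implicit Defensive.
Import Order.TTheory GRing.Theory Num.Theory.

Notation ground l := 'I_(l * l.+1).

(* An ordered partition Y = (Y_1,...,Y_{l+1}) of [2n] is encoded by the map
   f assigning to each element the index of its block: Y_i = f^-1(i).
   It is admissible iff every block has size l. *)
Definition part_ok (l : nat) (f : {ffun ground l -> 'I_l.+1}) : bool :=
  [forall i : 'I_l.+1, #|[set x | f x == i]| == l].

Definition generated (l : nat) (S : {set ground l})
  (f : {ffun ground l -> 'I_l.+1}) : bool :=
  [forall x in S, forall y in S, (f x == f y) ==> (x == y)].

(* Sample space: N-tuples of admissible ordered partitions (uniform measure
   on this set = N independent uniform partitions). *)
Definition Omega (l N : nat) : {set {ffun 'I_N -> {ffun ground l -> 'I_l.+1}}} :=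
  [set Y : {ffun 'I_N -> {ffun ground l -> 'I_l.+1}} | [forall j, part_ok (Y j)]].

Definition bad_event (l k N : nat) : {set {ffun 'I_N -> {ffun ground l -> 'I_l.+1}}} :=
  [set Y : {ffun 'I_N -> {ffun ground l -> 'I_l.+1}} in Omega l N | [exists S : {set ground l},
        (#|S| == 2 * k) && [forall j, ~~ generated S (Y j)]]].

Definition P_N (l k N : nat) : rat :=
  (#|bad_event l k N|%:R / #|Omega l N|%:R)%R.

Definition PS (l k : nat) : rat :=
  (1 - (l ^ (2 * k) * 'C(l.+1, 2 * k))%:R / ('C(l * l.+1, 2 * k))%:R)%R.

From mathcomp Require Import all_boot all_order all_algebra perm.
From mathcomp Require Import zify ring lra.
Import Order.TTheory GRing.Theory Num.Theory.

Set Implicit Arguments.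
Unset Strict Implicit.
Unset Printing Implicit Defensive.

(* For a set S of size 2k, the number of admissible partitions generating S
   is invariant under relabelling the ground set, so it depends on |S| only.
   Double counting the pairs (f, S) with f generating S, and using that every
   admissible f generates at least l^(2k) C(l+1, 2k) sets of size 2k (pick 2k
   blocks and one element in each), shows that a uniform partition misses a
   fixed S with probability at most P(S).  Independence of the N partitions
   and a union bound over S give the first bound.  The asymptotics follow from
   P(S) <= k(2k-1)/l and C(2n, 2k) <= 4^k l^(4k). *)

Lemma leq_card_bigcup (I T : finType) (P : pred I) (F : I -> {set T}) :
  #|\bigcup_(i | P i) F i| <= \sum_(i | P i) #|F i|.
Proof.
elim/big_rec2: _ => [|i U n _ IH]; first by rewrite cards0.
exact: leq_trans (leq_card_setU _ _) (leq_add _ IH).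
Qed.

Lemma card_ffun_forall (I T : finType) (A : {set T}) :
  #|[set Y : {ffun I -> T} | [forall j, Y j \in A]]| = #|A| ^ #|I|.
Proof.
rewrite -card_ffun_on; apply: eq_card => Y; rewrite inE.
exact: (sameP forallP ffun_onP).
Qed.

Lemma card_eq_perm_invariant (T : finType) (rT : Type) (F : {set T} -> rT) :
    (forall (s : {perm T}) (A : {set T}), F (s @: A) = F A) ->
  forall A B : {set T}, #|A| = #|B| -> F A = F B.
Proof.
(* Induction on |A :\: B|: the transposition of some x in A :\: B with some
   y in B :\: A maps A to a set with one point fewer outside B. *)
move=> Fperm A B; move: {2}#|A :\: B| (erefl #|A :\: B|) => n.
elim: n A => [|n IH] A hn hAB.
  by congr F; apply/eqP; rewrite eqEcard -setD_eq0 -cards_eq0 hn hAB leqnn.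
have /set0Pn[x] : A :\: B != set0 by rewrite -card_gt0 hn.
have /set0Pn[y] : B :\: A != set0.
  have := cardsID B A; have := cardsID A B; rewrite setIC -card_gt0; lia.
rewrite !inE => /andP[yA yB] /andP[xB xA].
rewrite -(Fperm (tperm x y)); apply: IH; last by rewrite card_imset //; exact: perm_inj.
have -> : tperm x y @: A :\: B = (A :\: B) :\ x.
  apply/setP => z; rewrite !inE -{1}(tpermV x y) im_permV inE.
  case: tpermP => [-> | -> | /eqP/negbTE zx _]; last by rewrite zx.
  - by rewrite (negbTE yA) eqxx andbF.
  - by rewrite yB !andbF.
by have := cardsD1 x (A :\: B); rewrite !inE xA xB hn; lia.
Qed.

Lemma leq_ffact_exp n m : n ^_ m <= n ^ m.
Proof.
rewrite ffact_prod (leq_trans (leq_prod (E2 := fun=> n) _)) ?prod_nat_const ?card_ord //.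
by move=> i _; apply: leq_subr.
Qed.

Lemma leq_bin_exp n m : 'C(n, m) <= n ^ m.
Proof.
by rewrite (leq_trans _ (leq_ffact_exp n m)) // -bin_ffact leq_pmulr ?fact_gt0.
Qed.

Lemma leq_expn_ffact a b j : a ^ j * b ^_ j <= (a * b) ^_ j.
Proof.
elim: j => [|j IH] //; rewrite !ffactnSr expnSr mulnACA leq_mul //.
by case: a {IH} => [|a]; last rewrite mulnBr leq_sub2l // leq_pmull.
Qed.

Lemma leq_expn_bin a b m : a ^ m * 'C(b, m) <= 'C(a * b, m).
Proof.
by rewrite -(leq_pmul2r (fact_gt0 m)) -mulnA !bin_ffact leq_expn_ffact.
Qed.

Section InjectiveSubsets.

Variables (T I : finType) (f : T -> I) (l : nat).
Hypothesis card_fiber : forall i, #|[set x | f x == i]| = l.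

Let fiber i : {set option T} := Some @: [set x | f x == i].
Let supp (g : {ffun I -> option T}) := [set i | g i != None].

Lemma pfamily_fiber {B : {set I}} {g i x} :
  g \in pfamily None B fiber -> g i = Some x -> f x = i.
Proof.
case/pfamilyP => /supportP gB gF gi; case: (boolP (i \in B)) => [/gF | /gB].
  by rewrite gi => /imsetP[y]; rewrite inE => /eqP <- [->].
by rewrite gi.
Qed.

Lemma pfamily_supp {B : {set I}} {g} : g \in pfamily None B fiber -> supp g = B.
Proof.
case/pfamilyP => /supportP gB gF; apply/setP => i; rewrite inE.
case: (boolP (i \in B)) => [/gF | /gB ->] //.
by case: (g i) => // /imsetP[].
Qed.

Lemma card_pfamily_fiber (B : {set I}) : #|pfamily None B fiber| = l ^ #|B|.
Proof.
rewrite card_pfamily foldrE big_map big_enum /=.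
rewrite (eq_bigr (fun=> l)) ?prod_nat_const // => i _.
by rewrite card_imset ?card_fiber //; apply: Some_inj.
Qed.

(* A partial choice function [g], picking an element of the [i]-th fiber or
   nothing for each [i], encodes the set [sel g] of its picks. *)
Let sel (g : {ffun I -> option T}) := [set x | g (f x) == Some x].
Let pick_in (S : {set T}) := [ffun i => [pick x in S | f x == i]].

Lemma sel_pickK {B : {set I}} {g} : g \in pfamily None B fiber -> pick_in (sel g) = g.
Proof.
move=> gB; apply/ffunP => i; rewrite ffunE.
case: pickP => [x /andP[] | none].
  by rewrite inE => /eqP gx /eqP <-.
case gi: (g i) => [x|] //.
by move: (none x); rewrite inE (pfamily_fiber gB gi) gi !eqxx.
Qed.

Lemma sel_dinjective_card {B : {set I}} {g} : g \in pfamily None B fiber ->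
  dinjectiveb f (sel g) && (#|sel g| == #|B|).
Proof.
move=> gB; have injS : {in sel g &, injective f}.
  by move=> x y; rewrite !inE => /eqP gx /eqP gy fxy; move: gx; rewrite fxy gy => -[].
apply/andP; split; first exact/dinjectiveP.
rewrite -(card_in_imset injS) -(pfamily_supp gB); apply/eqP/eq_card => i.
rewrite inE; apply/imsetP/idP => [[x] | ].
  by rewrite inE => /eqP gx ->; rewrite gx.
case gi: (g i) => [x|] // _; exists x; last by rewrite (pfamily_fiber gB gi).
by rewrite inE (pfamily_fiber gB gi) gi.
Qed.

Lemma card_dinjective_subsets m :
  l ^ m * 'C(#|I|, m) <= #|[set S : {set T} | (#|S| == m) && dinjectiveb f S]|.
Proof.
pose D := [set g | (#|supp g| == m) && (g \in pfamily None (supp g) fiber)].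
have cardD : #|D| = l ^ m * 'C(#|I|, m).
  rewrite -sum1_card (partition_big supp (fun B => #|B| == m)) => [|g]; last first.
    by rewrite inE => /andP[].
  rewrite mulnC -card_draws -sum_nat_const; apply: eq_big => [B | B /eqP hB].
    by rewrite inE.
  rewrite -hB -card_pfamily_fiber -sum1_card.
  apply: eq_bigl => g; rewrite inE; apply/idP/idP.
    by move=> /andP[/andP[_ gB] /eqP <-].
  by move=> gB; rewrite (pfamily_supp gB) hB gB !eqxx.
have selK : {in D, cancel sel pick_in}.
  by move=> g; rewrite inE => /andP[_ /sel_pickK].
rewrite -cardD -(card_in_imset (can_in_inj selK)).
apply/subset_leq_card/subsetP => _ /imsetP[g + ->].
rewrite !inE => /andP[/eqP <- /sel_dinjective_card] /andP[injg cardg].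
by rewrite injg cardg.
Qed.

End InjectiveSubsets.

Lemma double_count (I J : finType) (A : {set I}) (B : {set J}) (R : I -> J -> bool) :
  \sum_(i in A) #|[set j in B | R i j]| = \sum_(j in B) #|[set i in A | R i j]|.
Proof.
under eq_bigr do rewrite -sum1dep_card.
rewrite (exchange_big_dep (fun j => j \in B)) /= => [|i j _ /andP[] //].
apply: eq_bigr => j jB; rewrite sum1dep_card; apply: eq_card => i.
by rewrite !inE jB.
Qed.

Section Partitions.

Variable l : nat.
Local Notation T := (ground l).
Local Notation fT := {ffun T -> 'I_l.+1}.

Lemma generatedE (S : {set T}) (f : fT) : generated S f = dinjectiveb f S.
Proof.
apply/forall_inP/dinjectiveP => [H x y xS yS fxy | H x xS].
  by have /forall_inP/(_ y yS)/implyP/(_ (introT eqP fxy))/eqP := H x xS.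
by apply/forall_inP => y yS; apply/implyP => /eqP /H ->.
Qed.

Definition parts : {set fT} := [set f | part_ok f].
Definition gens (S : {set T}) : {set fT} := [set f in parts | generated S f].

Lemma gens_sub_parts S : gens S \subset parts.
Proof. by apply/subsetP => f; rewrite inE => /andP[]. Qed.

Lemma in_parts_gens S f : (f \in parts :\: gens S) = part_ok f && ~~ generated S f.
Proof. by rewrite !inE; case: (part_ok f); rewrite ?andbT. Qed.

Section Relabel.

Variable s : {perm T}.
Let relabel (f : fT) : fT := [ffun x => f (s x)].

Lemma part_ok_relabel f : part_ok (relabel f) = part_ok f.
Proof.
have fiberE i : #|[set x | relabel f x == i]| = #|[set x | f x == i]|.
  rewrite -[RHS](card_preimset _ (@perm_inj _ s)); apply: eq_card => x.
  by rewrite !inE ffunE.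
by apply: eq_forallb => i; rewrite fiberE.
Qed.

Lemma generated_relabel (S : {set T}) f : generated S (relabel f) = generated (s @: S) f.
Proof.
rewrite !generatedE; apply/dinjectiveP/dinjectiveP => injf.
  move=> _ _ /imsetP[x xS ->] /imsetP[y yS ->] fsxy.
  by congr (s _); apply: (injf x y xS yS); rewrite !ffunE.
move=> x y xS yS; rewrite !ffunE => fsxy; apply: perm_inj.
exact: injf (imset_f s xS) (imset_f s yS) fsxy.
Qed.

Lemma card_gens_perm (S : {set T}) : #|gens (s @: S)| = #|gens S|.
Proof.
have relabel_inj : injective relabel.
  move=> f g /ffunP fg; apply/ffunP => y.
  by have := fg ((s^-1)%g y); rewrite !ffunE permKV.
rewrite -[RHS](card_preimset _ relabel_inj); apply: eq_card => f.
by rewrite !inE part_ok_relabel generated_relabel.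
Qed.

End Relabel.

Lemma card_gens_eq (S S' : {set T}) : #|S| = #|S'| -> #|gens S| = #|gens S'|.
Proof. exact: card_eq_perm_invariant (fun s S => card_gens_perm s S) S S'. Qed.

Lemma card_gens_lower (S : {set T}) :
  #|parts| * (l ^ #|S| * 'C(l.+1, #|S|)) <= 'C(l * l.+1, #|S|) * #|gens S|.
Proof.
set m := #|S|; set draws := [set S' : {set T} | #|S'| == m].
have sum_gens : \sum_(S' in draws) #|gens S'| = 'C(l * l.+1, m) * #|gens S|.
  rewrite (eq_bigr (fun=> #|gens S|)) => [|S']; last by rewrite inE => /eqP /card_gens_eq.
  by rewrite sum_nat_const card_draws card_ord.
rewrite -sum_gens double_count -sum_nat_const leq_sum // => f.
rewrite inE => /forallP fok.
have := card_dinjective_subsets (fun i => eqP (fok i)) m; rewrite card_ord.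
move/leq_trans; apply; apply/subset_leq_card/subsetP => S'.
by rewrite !inE generatedE.
Qed.

End Partitions.

Section Sampling.

Variables l N : nat.
Local Notation T := (ground l).

Lemma card_Omega : #|Omega l N| = #|parts l| ^ N.
Proof.
rewrite -[in RHS](card_ord N) -card_ffun_forall; apply: eq_card => Y.
by rewrite !inE; apply: eq_forallb => j; rewrite inE.
Qed.

Definition missed (S : {set T}) :=
  [set Y in Omega l N | [forall j, ~~ generated S (Y j)]].

Lemma card_missed S : #|missed S| = (#|parts l| - #|gens S|) ^ N.
Proof.
rewrite -(setIidPr (gens_sub_parts S)) -cardsD -[N in RHS](card_ord N) -card_ffun_forall.
apply: eq_card => Y; rewrite !inE.
apply/andP/forallP => [[/forallP okY /forallP missY] j | H].
  by rewrite in_parts_gens okY missY.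
by split; apply/forallP => j; have := H j; rewrite in_parts_gens => /andP[].
Qed.

Lemma card_bad_event k :
  #|bad_event l k N| <= \sum_(S : {set T} | #|S| == 2 * k) (#|parts l| - #|gens S|) ^ N.
Proof.
under eq_bigr do rewrite -card_missed.
apply: leq_trans (leq_card_bigcup _ _); apply/subset_leq_card/subsetP => Y.
rewrite inE => /andP[YO /existsP[S /andP[cardS Ymiss]]].
by apply/bigcupP; exists S => //; rewrite inE YO.
Qed.

End Sampling.

Local Open Scope ring_scope.

Lemma PS_ge0 l k : 0 <= PS l k.
Proof.
rewrite subr_ge0; have [-> | M0] := posnP 'C(l * l.+1, 2 * k).
  by rewrite invr0 mulr0.
by rewrite ler_pdivrMr ?ltr0n // mul1r ler_nat leq_expn_bin.
Qed.

Lemma missed_ratio_le_PS l k (S : {set ground l}) : #|S| = (2 * k)%N ->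
  (#|parts l| - #|gens S|)%:R / #|parts l|%:R <= PS l k.
Proof.
move=> cardS; have [-> | O0] := posnP #|parts l|; first by rewrite invr0 mulr0 PS_ge0.
rewrite /PS natrB ?subset_leq_card ?gens_sub_parts // mulrBl divff ?pnatr_eq0 -?lt0n //.
rewrite lerD2l lerN2; have [-> | M0] := posnP 'C(l * l.+1, 2 * k).
  by rewrite invr0 mulr0 divr_ge0.
rewrite ler_pdivrMr ?ltr0n // mulrAC ler_pdivlMr ?ltr0n // -!natrM ler_nat.
by have := card_gens_lower S; rewrite cardS mulnC [X in (_ <= X)%N]mulnC.
Qed.

Lemma P_N_le l k N : P_N l k N <= 'C(l * l.+1, 2 * k)%:R * PS l k ^+ N.
Proof.
rewrite /P_N card_Omega.
apply: (@le_trans _ _ ((\sum_(S : {set ground l} | #|S| == 2 * k)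
  (#|parts l| - #|gens S|) ^ N)%N%:R / (#|parts l| ^ N)%:R)).
  by rewrite ler_wpM2r ?invr_ge0 ?ler0n ?ler_nat ?card_bad_event.
have -> : 'C(l * l.+1, 2 * k) = (\sum_(S : {set ground l} | #|S| == 2 * k) 1)%N.
  by rewrite sum1dep_card card_draws card_ord.
rewrite !natr_sum !mulr_suml; apply: ler_sum => S /eqP cardS.
rewrite mul1r !natrX -expr_div_n.
by apply: lerXn2r; rewrite ?nnegrE ?divr_ge0 ?PS_ge0 ?missed_ratio_le_PS.
Qed.

Lemma ffact_ratio_lower_step (R : realDomainType) (L x a : R) :
    1 <= L -> 0 <= x <= L -> 0 <= x * (x - 1) -> 0 <= a ->
  (2 * L - (x + 1) * x) * (a * (L * (L + 1) - x))
    <= (2 * L - x * (x - 1)) * a * (L * (L + 1 - x)).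
Proof.
move=> L1 /andP[x0 xL] xx a0; rewrite -subr_ge0.
have -> : (2 * L - x * (x - 1)) * a * (L * (L + 1 - x))
            - (2 * L - (x + 1) * x) * (a * (L * (L + 1) - x))
          = a * x * (4 * L - 2 * x + x * (x - 1) * (L - 1)) by ring.
have : 0 <= x * (x - 1) * (L - 1) by rewrite mulr_ge0 // subr_ge0.
by move=> ?; rewrite !mulr_ge0 //; lra.
Qed.

Lemma ffact_ratio_lower (R : realDomainType) l j : (0 < l)%N -> (j <= l.+1)%N ->
  (2 * l%:R - j%:R * (j%:R - 1)) * ((l * l.+1) ^_ j)%:R
    <= 2 * l%:R * (l ^ j * l.+1 ^_ j)%:R :> R.
Proof.
move=> l0; elim: j => [|j IH] jl; first by rewrite !ffactn0 mul0r subr0 mul1n.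
set L : R := l%:R; set x : R := j%:R.
have jl' : (j <= l)%N by rewrite -ltnS.
have Eprod : ((l * l.+1) ^_ j.+1)%:R = ((l * l.+1) ^_ j)%:R * (L * (L + 1) - x).
  by rewrite ffactnSr natrM natrB ?natrM ?natr1 // (leq_trans jl') ?leq_pmulr.
have Efact : (l ^ j.+1 * l.+1 ^_ j.+1)%:R
             = (l ^ j * l.+1 ^_ j)%:R * (L * (L + 1 - x)) :> R.
  rewrite !ffactnSr expnSr mulnACA natrM; congr (_ * _).
  by rewrite natrM natrB ?natr1 // ltnW.
rewrite Eprod Efact -[j.+1%:R]natr1 -/x addrK mulrA.
apply: le_trans (ffact_ratio_lower_step _ _ _ _) _.
- by rewrite /L ler1n.
- by rewrite /x /L !ler0n ler_nat.
- rewrite /x; case: (j) => [|i]; first by rewrite mul0r.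
  by rewrite -natr1 addrK mulr_ge0 ?addr_ge0 ?ler0n.
- by rewrite ler0n.
rewrite ler_wpM2r ?IH 1?ltnW // mulr_ge0 ?ler0n // subr_ge0.
by rewrite /x /L natr1 ler_nat ltnW.
Qed.

Lemma PS_le_div l k : (0 < l)%N -> (2 * k <= l.+1)%N -> PS l k <= k%:R * (2 * k%:R - 1) / l%:R.
Proof.
move=> l0 kl; have := ffact_ratio_lower rat l0 kl.
rewrite /PS -!bin_ffact mulnA !natrM !mulrA ler_pM2r ?ltr0n ?fact_gt0 //.
rewrite -[2 * l%:R * _ * _]mulrA.
set M : rat := 'C(l * l.+1, 2 * k)%:R; set t : rat := (l ^ _)%:R * _.
have M0 : 0 < M by rewrite ltr0n bin_gt0 (leq_trans kl) ?leq_pmull.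
have L0 : 0 < l%:R :> rat by rewrite ltr0n.
move=> H; have -> : 1 - t / M = (M - t) / M by field; rewrite gt_eqF.
rewrite ler_pdivrMr // mulrAC ler_pdivlMr //.
nra.
Qed.

Lemma leq_bin_pow l k : ('C(l * l.+1, 2 * k) <= 4 ^ k * l ^ (4 * k))%N.
Proof.
have -> : (4 ^ k * l ^ (4 * k) = (2 * l * l) ^ (2 * k))%N.
  by rewrite !expnMn -mulnA -expnD -mulnDl (expnM 2 2 k).
have [-> | k0] := posnP k; first by rewrite bin0.
apply: leq_trans (leq_bin_exp _ _) _; rewrite leq_exp2r ?muln_gt0 //; nia.
Qed.

Lemma P_N_ge0 l k N : 0 <= P_N l k N.
Proof. by rewrite divr_ge0 ?ler0n. Qed.

Lemma P_N_le_pow l k N : (0 < l)%N -> (2 * k <= l.+1)%N ->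
  P_N l k N <= 4 ^+ k * (k%:R * (2 * k%:R - 1)) ^+ N * (l%:R ^+ (4 * k) / l%:R ^+ N).
Proof.
move=> l0 kl; apply: le_trans (P_N_le l k N) _.
have L0 : l%:R != 0 :> rat by rewrite pnatr_eq0 -lt0n.
have -> : 4 ^+ k * (k%:R * (2 * k%:R - 1)) ^+ N * (l%:R ^+ (4 * k) / l%:R ^+ N)
          = 4 ^+ k * l%:R ^+ (4 * k) * (k%:R * (2 * k%:R - 1) / l%:R) ^+ N :> rat.
  by rewrite expr_div_n; field; rewrite expf_neq0.
apply: ler_pM; rewrite ?ler0n ?exprn_ge0 ?PS_ge0 //.
  by rewrite -!natrX -natrM ler_nat leq_bin_pow.
by apply: lerXn2r; rewrite ?nnegrE ?PS_ge0 ?PS_le_div // (le_trans (PS_ge0 l k)) ?PS_le_div.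
Qed.

Lemma P_N_vanishes k N : (4 * k < N)%N ->
  forall eps : rat, 0 < eps -> exists L, forall l, (L <= l)%N -> P_N l k N <= eps.
Proof.
move=> kN eps eps0; set C : rat := 4 ^+ k * (k%:R * (2 * k%:R - 1)) ^+ N.
have C0 : 0 <= C.
  rewrite mulr_ge0 ?exprn_ge0 //; case: (k) => [|k']; first by rewrite mul0r.
  by rewrite mulr_ge0 // subr_ge0 -natrM ler1n muln_gt0.
exists (maxn (2 * k).+1 (Num.bound (eps^-1 * C))) => l; rewrite geq_max => /andP[kl bl].
have l0 : (0 < l)%N by apply: leq_trans kl.
have Lpos : 0 < l%:R :> rat by rewrite ltr0n.
apply: le_trans (P_N_le_pow N l0 (ltnW (leqW kl))) _.
apply: (@le_trans _ _ (C / l%:R)).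
  rewrite ler_wpM2l // ler_pdivrMr ?exprn_gt0 // mulrC ler_pdivlMr //.
  by rewrite -exprSr -!natrX ler_nat leq_pexp2l.
rewrite ler_pdivrMr // -ler_pdivrMl //; apply/ltW/(lt_le_trans (archi_boundP _)).
  by rewrite mulr_ge0 // invr_ge0 ltW.
by rewrite ler_nat.
Qed.

Theorem mainTheorem10 (k N : nat) (hk : (0 < k)%N) (hN : (0 < N)%N) :
  (forall l : nat, (0 < l)%N -> (2 * k <= l + 1)%N ->
     P_N l k N <= ('C(l * l.+1, 2 * k))%:R * PS l k ^+ N)
  /\ (exists (C : rat) (L : nat), forall l : nat, (L <= l)%N -> (2 * k <= l + 1)%N ->
        `|P_N l k N| <= C * (l%:R : rat) ^ ((4 * k)%:Z - N%:Z))
  /\ ((4 * k < N)%N -> forall eps : rat, 0 < eps ->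
        exists L : nat, forall l : nat, (L <= l)%N -> P_N l k N <= eps).
Proof.
split; first by move=> l _ _; apply: P_N_le.
split; last exact: P_N_vanishes.
exists (4 ^+ k * (k%:R * (2 * k%:R - 1)) ^+ N), 1%N => l l0 kl.
have L0 : l%:R != 0 :> rat by rewrite pnatr_eq0 -lt0n.
rewrite ger0_norm ?P_N_ge0 // expfzDr // -exprnP -exprnN.
by rewrite addn1 in kl; apply: P_N_le_pow.
Qed.
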